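(* Let $\Delta$ be a simplicial polytopal fan in $\mathbb{R}^d$ with ray generators $\mathbf{v}_1,\ldots,\mathbf{v}_n$ and maximal cones (facets) $F_1,\ldots,F_r$. Then the ray-facet incidence graph $G_\Delta$ has a matching of size $n$.
   Context: A fan is simplicial if every cone is generated by linearly independent vectors; polytopal if it is the normal fan of a polytope (so it is complete and full-dimensional). The ray-facet incidence graph $G_\Delta$ is the bipartite graph on $[n]\sqcup[r]$ in which $i\in[n]$ and $j\in[r]$ are adjacent iff $\mathbf{v}_i$ is a generator of $F_j$. *)

From HB Require Import structures.
From mathcomp Require Import all_boot all_order all_algebra.
Set Implicit Arguments. Unset Strict Implicit. Unset Printing Implicit Defensive.
Import Order.TTheory GRing.Theory Num.Theory.
Local Open Scope ring_scope.

Definition dotv (R : realFieldType) (d : nat) (u w : 'rV[R]_d) : R :=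
  (u *m w^T) 0 0.

(* A fan Delta in R^d is given by ray generators v : 'I_n -> 'rV_d and
   maximal cones (facets) F_j, each described by the set of indices of its
   ray generators. *)

Definition cone_of (R : realFieldType) (d n : nat) (v : 'I_n -> 'rV[R]_d)
  (S : {set 'I_n}) (x : 'rV[R]_d) : Prop :=
  exists a : 'I_n -> R, (forall i, 0 <= a i) /\ x = \sum_(i in S) a i *: v i.

Definition simplicial_fan (R : realFieldType) (d n r : nat)
  (v : 'I_n -> 'rV[R]_d) (F : 'I_r -> {set 'I_n}) : Prop :=
  forall j (a : 'I_n -> R), \sum_(i in F j) a i *: v i = 0 ->
    forall i, i \in F j -> a i = 0.

(* basic well-formedness of the fan data: the v_i are the distinct rays of
   the fan (each lies in some maximal cone, no two span the same ray) and
   the F_j are distinct maximal cones *)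
Definition fan_data (R : realFieldType) (d n r : nat)
  (v : 'I_n -> 'rV[R]_d) (F : 'I_r -> {set 'I_n}) : Prop :=
  [/\ forall i, exists j, i \in F j,
      forall i i', i != i' -> ~ (exists t : R, 0 < t /\ v i' = t *: v i)
    & forall j j', j != j' -> ~ (forall x, cone_of v (F j) x <-> cone_of v (F j') x)].

(* Polytope P = conv{X_0,...,X_(m-1)}. Normal cone of P at X_k. *)
Definition normal_cone (R : realFieldType) (d m : nat) (X : 'I_m -> 'rV[R]_d)
  (k : 'I_m) (c : 'rV[R]_d) : Prop :=
  forall l, dotv c (X l) <= dotv c (X k).

(* X_k is a vertex of conv(X): some linear functional is uniquely maximized
   at X_k (equivalently, the normal cone at X_k is full-dimensional). *)
Definition is_vertex (R : realFieldType) (d m : nat) (X : 'I_m -> 'rV[R]_d)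
  (k : 'I_m) : Prop :=
  exists c, forall l, X l != X k -> dotv c (X l) < dotv c (X k).

Definition full_dim_polytope (R : realFieldType) (d m : nat)
  (X : 'I_m -> 'rV[R]_d) : Prop :=
  exists k0 : 'I_m, \rank (\matrix_(l < m) (X l - X k0)) = d.

(* Delta is polytopal: it is the normal fan of a full-dimensional polytope,
   i.e. its maximal cones are exactly the normal cones at the vertices. *)
Definition polytopal_fan (R : realFieldType) (d n r : nat)
  (v : 'I_n -> 'rV[R]_d) (F : 'I_r -> {set 'I_n}) : Prop :=
  exists (m : nat) (X : 'I_m -> 'rV[R]_d),
    [/\ full_dim_polytope X,
        forall j, exists k, is_vertex X k /\
          (forall c, cone_of v (F j) c <-> normal_cone X k c)
      & forall k, is_vertex X k -> exists j,
          (forall c, cone_of v (F j) c <-> normal_cone X k c)].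

Definition incidence_edge (n r : nat) (F : 'I_r -> {set 'I_n})
  (e : 'I_n * 'I_r) : bool := e.1 \in F e.2.

Definition is_matching (n r : nat) (F : 'I_r -> {set 'I_n})
  (M : {set 'I_n * 'I_r}) : Prop :=
  (forall e, e \in M -> incidence_edge F e) /\
  (forall e e', e \in M -> e' \in M -> e != e' -> e.1 != e'.1 /\ e.2 != e'.2).

From mathcomp Require Import all_boot all_order all_algebra.
From mathcomp Require Import lra.
Set Implicit Arguments. Unset Strict Implicit. Unset Printing Implicit Defensive.
Import Order.TTheory GRing.Theory Num.Theory.

(* By Hall's theorem it suffices that any [k] rays lie, together, in at least
   [k] facets.  Two facts about a simplicial polytopal fan give this: facets
   are pairwise incomparable, and every ridge [F_j \ {l}] lies in a second
   facet.  Hence a facet [F_j] through [v_i] produces [|F_j|] distinct facets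
   through [v_i] ([F_j] itself and its neighbours across the ridges avoiding
   [i]), i.e. [deg i >= |F_j|] along every edge of [G_Delta]; giving each
   facet weight [1/|F_j|] on each of its rays, every ray collects weight at
   least 1 and every facet spends at most 1, which is Hall's condition.
   Both facts are read off the normal fan: [cone(F_j)] is the normal cone
   at a vertex, two normal cones meet in a face of each, and a functional
   with a zero coordinate on [cone(F_j)] is also maximised at another vertex. *)

Section HallMarriage.
Variables (I J : finType) (E : I -> J -> bool).
Implicit Types (A S T : {set I}) (B : {set J}) (f : I -> J).

Definition nbh B S := [set j in B | [exists i in S, E i j]].

Definition hall_cond A B :=
  forall S : {set I}, S \subset A -> #|S| <= #|nbh B S|.

Definition matches_into A B f :=
  {in A &, injective f} /\ {in A, forall i, (f i \in B) && E i (f i)}.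

Lemma nbh_sub B S : nbh B S \subset B.
Proof. by apply/subsetP => j; rewrite inE => /andP[]. Qed.

Lemma matches_into_nbh A B f : matches_into A B f -> matches_into A (nbh B A) f.
Proof.
move=> [inj_f fAB]; split=> // i iA; have /andP[fB Eif] := fAB i iA.
by rewrite inE fB Eif andbT; apply/existsP; exists i; rewrite iA.
Qed.

Lemma matches_into_glue (A1 A2 : {set I}) (B1 B2 : {set J}) (f1 f2 : I -> J) :
  [disjoint B1 & B2] -> matches_into A1 B1 f1 -> matches_into A2 B2 f2 ->
  matches_into (A1 :|: A2) (B1 :|: B2) (fun i => if i \in A1 then f1 i else f2 i).
Proof.
move=> dB [inj1 f1B] [inj2 f2B].
have A2i i : i \in A1 :|: A2 -> i \notin A1 -> i \in A2 by rewrite inE => /orP[->|].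
have sep x y : x \in A1 -> y \in A1 :|: A2 -> y \notin A1 -> f1 x != f2 y.
  move=> xA yA yA1; have /andP[/= fxB _] := f1B x xA.
  have /andP[/= fyB _] := f2B y (A2i y yA yA1).
  by apply: contraTneq dB => fxy; apply/pred0Pn; exists (f1 x); rewrite /= fxB fxy.
split=> [x y xA yA /=|i iA /=].
  case: ifP => xA1; case: ifP => yA1.
  - exact: inj1.
  - by move=> fxy; have := sep x y xA1 yA (negbT yA1); rewrite fxy eqxx.
  - by move=> fxy; have := sep y x yA1 xA (negbT xA1); rewrite fxy eqxx.
  - by apply: inj2; apply: A2i; rewrite ?xA1 ?yA1.
case: ifP => iA1.
  by have /andP[fB ->] := f1B i iA1; rewrite inE fB.
by have /andP[fB ->] := f2B i (A2i i iA (negbT iA1)); rewrite inE fB orbT.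
Qed.

Lemma hall_condS A A' B : A' \subset A -> hall_cond A B -> hall_cond A' B.
Proof. by move=> sA hAB S sS; apply/hAB/(subset_trans sS). Qed.

Lemma hall_cond_tight A B S0 : hall_cond A B -> S0 \subset A ->
  #|nbh B S0| <= #|S0| -> hall_cond (A :\: S0) (B :\: nbh B S0).
Proof.
move=> hAB sS0 tight T; rewrite subsetD => /andP[sTA dTS0].
have sTS0 : T :|: S0 \subset A by rewrite subUset sS0 sTA.
have nbhU : nbh B (T :|: S0) \subset nbh (B :\: nbh B S0) T :|: nbh B S0.
  apply/subsetP => j; rewrite !inE => /andP[jB /existsP[i /andP[iTS0 Eij]]].
  have ex_i P : i \in P -> [exists i0 in P, E i0 j].
    by move=> iP; apply/existsP; exists i; rewrite iP.
  move: iTS0; rewrite inE jB /= => /orP[/ex_i -> | /ex_i ->]; last by rewrite orbT.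
  by case: [exists _ in S0, _].
have := hAB _ sTS0; rewrite cardsU (disjoint_setI0 dTS0) cards0 subn0 => le1.
have le2 := leq_trans le1 (subset_leq_card nbhU).
have le3 := leq_trans le2 (leq_card_setU _ _).
by rewrite -(leq_add2r #|S0|) (leq_trans le3) // leq_add2l.
Qed.

Lemma hall_cond_slack A B a b :
  (forall S, S \proper A -> S != set0 -> #|S| < #|nbh B S|) ->
  a \in A -> hall_cond (A :\ a) (B :\ b).
Proof.
move=> slack aA T sT; have [->|T0] := eqVneq T set0; first by rewrite cards0.
have pT : T \proper A.
  rewrite properEneq (subset_trans sT) ?subsetDl // andbT.
  by apply: contraTneq sT => ->; apply/subsetPn; exists a; rewrite // !inE eqxx.
have nbhD : nbh B T \subset b |: nbh (B :\ b) T.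
  by apply/subsetP => j; rewrite !inE => /andP[-> ->]; rewrite !andbT orbN.
have := leq_trans (slack T pT T0) (subset_leq_card nbhD).
by rewrite cardsU1; case: (b \notin _); rewrite ?add1n ?add0n ?ltnS // => /ltnW.
Qed.

Variable j0 : J.

Theorem hall_matching_in A B : hall_cond A B -> exists f, matches_into A B f.
Proof.
elim: {A}_.+1 {-2}A (ltnSn #|A|) B => // k IH A ltAk B hAB.
have [->|[a aA]] := set_0Vmem A.
  by exists (fun=> j0); split=> [x y|i]; rewrite inE.
case: (boolP [exists S0 : {set I}, [&& S0 \proper A, S0 != set0 & #|nbh B S0| <= #|S0|]]).
- move=> /existsP[S0 /and3P[pS0 S0n0 tight]]; have sS0 := proper_sub pS0.
  have [f1 match1] := IH S0 (leq_trans (proper_card pS0) ltAk) B (hall_condS sS0 hAB).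
  have [|f2 match2] := IH (A :\: S0) _ (B :\: nbh B S0) (hall_cond_tight hAB sS0 tight).
    rewrite -ltnS (leq_trans _ ltAk) // ltnS -(cardsID S0 A) (setIidPr sS0).
    by rewrite -[X in X < _]add0n ltn_add2r card_gt0.
  have := matches_into_glue _ (matches_into_nbh match1) match2.
  have -> : S0 :|: A :\: S0 = A by rewrite -{1}(setIidPr sS0) setID.
  have -> : nbh B S0 :|: B :\: nbh B S0 = B by rewrite -{1}(setIidPr (nbh_sub B S0)) setID.
  by rewrite -setI_eq0 setIDA setDIl setDv set0I eqxx => /(_ isT); exact: ex_intro.
- move=> /existsPn noTight.
  have slack S : S \proper A -> S != set0 -> #|S| < #|nbh B S|.
    by move=> pS Sn0; have := noTight S; rewrite pS Sn0 ltnNge => ->.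
  have /set0Pn[b] : nbh B [set a] != set0.
    by rewrite -card_gt0 (leq_trans _ (hAB [set a] _)) ?cards1 ?sub1set.
  rewrite inE => /andP[bB /existsP[a' /andP[/set1P-> Eab]]].
  have [|f2 match2] := IH (A :\ a) _ (B :\ b) (hall_cond_slack b slack aA).
    by rewrite -ltnS (leq_trans _ ltAk) // (cardsD1 a A) aA.
  have match1 : matches_into [set a] [set b] (fun=> b).
    by split=> [x y /set1P-> /set1P->|i /set1P->] //; rewrite set11.
  have := matches_into_glue _ match1 match2.
  by rewrite !setD1K // disjoints1 !inE eqxx => /(_ isT); exact: ex_intro.
Qed.

Corollary hall_marriage : (forall S, #|S| <= #|nbh setT S|) ->
  exists f : I -> J, injective f /\ forall i, E i (f i).
Proof.
move=> hall; have [f [inj_f fE]] := @hall_matching_in setT setT (fun S _ => hall S).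
exists f; split=> [x y|i]; first exact: inj_f.
by have /andP[] := fE i (in_setT i).
Qed.

End HallMarriage.

Section DegreeCondition.
Variables (I J : finType) (E : I -> J -> bool).
Local Open Scope ring_scope.

Lemma hall_of_degree_le : (forall i, exists j, E i j) ->
  (forall i j, E i j -> #|[set i' | E i' j]| <= #|[set j' | E i j']|)%N ->
  forall S : {set I}, (#|S| <= #|nbh E setT S|)%N.
Proof.
move=> covered deg_le S.
pose col j := [set i | E i j]; pose row i := [set j | E i j].
pose w j : rat := #|col j|%:R^-1.
have row_ge1 i : 1 <= \sum_(j in row i) w j.
  have [j Eij] := covered i.
  have row_gt0 : (0 < #|row i|)%N by rewrite card_gt0; apply/set0Pn; exists j; rewrite inE.
  have -> : 1 = \sum_(j in row i) #|row i|%:R^-1 :> rat.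
    by rewrite sumr_const -[_ *+ _]mulr_natr mulVf // pnatr_eq0 -lt0n.
  apply: ler_sum => j' /[!inE] Eij'.
  have col_gt0 : (0 < #|col j'|)%N by rewrite card_gt0; apply/set0Pn; exists i; rewrite inE.
  by rewrite /w lef_pV2 ?posrE ?ltr0n ?ler_nat //; apply: deg_le.
rewrite -(ler_nat rat).
have sum_row : #|S|%:R <= \sum_(i in S) \sum_(j in row i) w j.
  by rewrite -sumr_const ?ler_sum.
apply: le_trans sum_row _.
rewrite (exchange_big_dep (mem (nbh E setT S))) /=; last first.
  by move=> i j iS /[!inE] Eij; apply/existsP; exists i; rewrite iS.
rewrite -sumr_const; apply: ler_sum => j /[!inE] /existsP[i0 /andP[_ Ei0j]].
have col_gt0 : (0 < #|col j|)%N by rewrite card_gt0; apply/set0Pn; exists i0; rewrite inE.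
rewrite (eq_bigl (mem [set i in S | E i j])) => [|i]; last by rewrite !inE.
apply: (@le_trans _ _ (w j *+ #|col j|)).
  rewrite sumr_const; apply: ler_wpMn2l; first by rewrite invr_ge0 ler0n.
  by apply/subset_leq_card/subsetP => i /[!inE] /andP[].
by rewrite -[_ *+ _]mulr_natr mulVf // pnatr_eq0 -lt0n.
Qed.
End DegreeCondition.

Section RidgeFamily.
Variables (I J : finType) (F : J -> {set I}).
Hypothesis F_antichain : forall j j', F j \subset F j' -> j = j'.
Hypothesis ridge_shared :
  forall j l, l \in F j -> exists2 j', j' != j & F j :\ l \subset F j'.

Lemma card_le_degree j i : i \in F j -> #|F j| <= #|[set j' | i \in F j']|.
Proof.
move=> iFj.
have nb_ex l : exists j', l \in F j -> j' != j /\ F j :\ l \subset F j'.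
  by case: (boolP (l \in F j)) => [/ridge_shared[j' ? ?]|_]; [exists j' | exists j].
have [nb nbP] := fin_all_exists nb_ex.
pose g l := if l == i then j else nb l.
have g_inj : {in F j &, injective g}.
  have nb_ridge l1 l2 : l1 \in F j -> l2 \in F j -> l1 != l2 -> nb l1 != nb l2.
    move=> l1F l2F l12; have [nb1j sub1] := nbP l1 l1F; have [_ sub2] := nbP l2 l2F.
    apply: contra nb1j => /eqP nb12; apply/eqP/esym/F_antichain/subsetP => t tF.
    case: (eqVneq t l1) => [->|tl1]; last by apply/(subsetP sub1); rewrite !inE tl1.
    by rewrite nb12; apply/(subsetP sub2); rewrite !inE l1F l12.
  move=> l1 l2 l1F l2F; rewrite /g.
  case: (eqVneq l1 i) => [->|l1i]; case: (eqVneq l2 i) => [->|l2i] // gl.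
  - by have [] := nbP l2 l2F; rewrite gl eqxx.
  - by have [] := nbP l1 l1F; rewrite gl eqxx.
  - by apply/eqP; apply: contra_eqT gl => /nb_ridge; apply.
rewrite -(card_in_imset g_inj); apply/subset_leq_card/subsetP => _ /imsetP[l lF ->].
rewrite inE /g; case: (eqVneq l i) => // li.
by have [_ /subsetP] := nbP l lF; apply; rewrite !inE eq_sym li.
Qed.

End RidgeFamily.

Local Open Scope ring_scope.

Section DotProduct.
Variables (R : realFieldType) (d : nat).
Implicit Types (u w x : 'rV[R]_d).

Lemma dotvE u w : dotv u w = \sum_k u 0 k * w 0 k.
Proof. by rewrite /dotv !mxE; apply: eq_bigr => k _; rewrite mxE. Qed.

Lemma dotvC u w : dotv u w = dotv w u.
Proof. by rewrite !dotvE; apply: eq_bigr => k _; rewrite mulrC. Qed.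

Lemma dotvDl u w x : dotv (u + w) x = dotv u x + dotv w x.
Proof. by rewrite /dotv mulmxDl mxE. Qed.

Lemma dotvNl u x : dotv (- u) x = - dotv u x.
Proof. by rewrite /dotv mulNmx mxE. Qed.

Lemma dotvBl u w x : dotv (u - w) x = dotv u x - dotv w x.
Proof. by rewrite dotvDl dotvNl. Qed.

Lemma dotvZl (a : R) u x : dotv (a *: u) x = a * dotv u x.
Proof. by rewrite /dotv -scalemxAl mxE. Qed.

Lemma dotvBr u w x : dotv x (u - w) = dotv x u - dotv x w.
Proof. by rewrite dotvC dotvBl !(dotvC x). Qed.

Lemma dotv_gt0 u : u != 0 -> 0 < dotv u u.
Proof.
move=> u_neq0; have sq_ge0 k : 0 <= u 0 k * u 0 k by rewrite -expr2 sqr_ge0.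
rewrite dotvE lt_def sumr_ge0 // andbT; apply: contra u_neq0.
rewrite psumr_eq0 // => /allP u0; apply/eqP/rowP => k.
by have := u0 k (mem_index_enum k); rewrite -expr2 sqrf_eq0 mxE => /eqP.
Qed.

Lemma dotv_lt_sq u w : u != w -> dotv w w <= dotv u u -> dotv u w < dotv u u.
Proof.
move=> uw le_wu; have := @dotv_gt0 (u - w); rewrite subr_eq0 => /(_ uw).
by rewrite dotvBl !dotvBr (dotvC w u); lra.
Qed.

End DotProduct.

Lemma ex_small_scale (R : realFieldType) (T : finType) (P : pred T) (al be : T -> R) :
  (forall t, P t -> 0 < al t) ->
  exists2 del : R, 0 < del & forall t, P t -> del * be t < al t.
Proof.
move=> al_gt0; have ratio_ge0 t : P t -> 0 <= `|be t| / al t.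
  by move=> Pt; rewrite divr_ge0 ?normr_ge0 ?ltW ?al_gt0.
set S := \sum_(t | P t) `|be t| / al t.
have S_ge0 : 0 <= S by apply: sumr_ge0.
exists (1 + S)^-1 => [|t Pt]; first by rewrite invr_gt0 ltr_wpDr.
have ratio_le : `|be t| / al t <= S.
  by rewrite /S (bigD1 t) //= lerDl sumr_ge0 // => s /andP[Ps _]; apply: ratio_ge0.
apply: (@le_lt_trans _ _ ((1 + S)^-1 * `|be t|)).
  by rewrite ler_wpM2l ?invr_ge0 ?ler_wpDr // real_ler_norm ?num_real.
rewrite mulrC ltr_pdivrMr ?ltr_wpDr // -ltr_pdivrMl ?al_gt0 // mulrC.
by apply: le_lt_trans ratio_le _; rewrite ltrDr.
Qed.

Section NormalCones.
Variables (R : realFieldType) (d m : nat) (X : 'I_m -> 'rV[R]_d).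

Lemma normal_cone_strict k c :
  (forall l, X l != X k -> dotv c (X l) < dotv c (X k)) -> normal_cone X k c.
Proof. by move=> c_strict l; case: (eqVneq (X l) (X k)) => [->//|/c_strict/ltW]. Qed.

Lemma perturb_strict_max p w k : exists2 del : R, 0 < del &
  forall l, dotv p (X l) < dotv p (X k) ->
    dotv (p + del *: w) (X l) < dotv (p + del *: w) (X k).
Proof.
have gap_gt0 l : dotv p (X l) < dotv p (X k) -> 0 < dotv p (X k) - dotv p (X l).
  by rewrite subr_gt0.
have [del del_gt0 small] := ex_small_scale (fun l => dotv w (X l) - dotv w (X k)) gap_gt0.
exists del => // l /small; rewrite !dotvDl !dotvZl; lra.
Qed.

Lemma normal_cone_vertex (k0 : 'I_m) g : exists k, is_vertex X k /\ normal_cone X k g.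
Proof.
(* Among the maximisers of [g], one of largest norm is a vertex: tilting [g]
   towards it breaks every tie in its favour. *)
case: (arg_maxP (fun l => dotv g (X l)) (erefl : predT k0)) => a _ a_max.
case: (@arg_maxP _ _ _ a [pred l | dotv g (X l) == dotv g (X a)]
  (fun l => dotv (X l) (X l)) (eqxx _)) => k /eqP k_max k_far.
have g_nc : normal_cone X k g by move=> l; rewrite k_max; apply: a_max.
exists k; split=> //.
have [del del_gt0 keep] := perturb_strict_max g (X k) k.
exists (g + del *: X k) => l lk.
have [eq_gl | lt_gl] := eqVneq (dotv g (X l)) (dotv g (X k)); last first.
  by apply: keep; rewrite lt_neqAle lt_gl g_nc.
rewrite !dotvDl !dotvZl eq_gl ltrD2l ltr_pM2l // dotv_lt_sq 1?eq_sym //.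
by apply: k_far; rewrite /= eq_gl k_max.
Qed.

Lemma normal_cone_face k k' x y : normal_cone X k' x -> normal_cone X k' y ->
  normal_cone X k (x + y) -> normal_cone X k x.
Proof.
move=> x_nc y_nc xy_nc l.
by have := x_nc k; have := y_nc k; have := xy_nc k'; have := x_nc l; rewrite !dotvDl; lra.
Qed.

Lemma normal_cone_tie k b p : normal_cone X k p -> X b != X k ->
  dotv p (X b) = dotv p (X k) ->
  exists k', [/\ is_vertex X k', X k' != X k & normal_cone X k' p].
Proof.
(* A maximiser of [p] tilted towards [X b - X k] still maximises [p], but
   cannot be [X k]. *)
move=> p_nc bk tie; pose h := X b - X k.
have [del del_gt0 keep] := perturb_strict_max p h b.
have [k' [k'_vert k'_max]] := normal_cone_vertex b (p + del *: h).
have := k'_max b; rewrite !dotvDl !dotvZl => le_bk'.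
have pk' : dotv p (X k') = dotv p (X k).
  apply/le_anti; rewrite p_nc /= leNgt -tie; apply/negP => /keep.
  by rewrite !dotvDl !dotvZl ltNge le_bk'.
exists k'; split=> //; last by move=> l; rewrite pk' p_nc.
apply: contraTneq le_bk' => k'k; rewrite -ltNge k'k -tie ltrD2l ltr_pM2l //.
by rewrite -subr_gt0 -dotvBr dotv_gt0 // subr_eq0.
Qed.

End NormalCones.

Lemma sum_indicator_scale (R : pzRingType) (V : lmodType R) (I : finType)
    (S : {set I}) (f : I -> V) i :
  i \in S -> \sum_(t in S) (t == i)%:R *: f t = f i.
Proof.
move=> iS; rewrite (bigD1 i) //= eqxx scale1r big1 ?addr0 // => t /andP[_ /negbTE->].
by rewrite scale0r.
Qed.

Section Cones.
Variables (R : realFieldType) (d n : nat) (v : 'I_n -> 'rV[R]_d).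
Implicit Types (S : {set 'I_n}) (x y : 'rV[R]_d).

Lemma cone_of_gen S i : i \in S -> cone_of v S (v i).
Proof.
by move=> iS; exists (fun t => (t == i)%:R); rewrite sum_indicator_scale // => t; rewrite ler0n.
Qed.

Lemma cone_ofZ S t x : 0 <= t -> cone_of v S x -> cone_of v S (t *: x).
Proof.
move=> t_ge0 [a [a_ge0 ->]]; exists (fun s => t * a s); split=> [s|].
  by rewrite mulr_ge0.
by rewrite scaler_sumr; apply: eq_bigr => s _; rewrite scalerA.
Qed.

Lemma cone_of_subset S S' x : S \subset S' -> cone_of v S x -> cone_of v S' x.
Proof.
move=> sSS' [a [a_ge0 ->]]; exists (fun s => a s *+ (s \in S)); split=> [s|].
  by rewrite mulrn_wge0.
rewrite [RHS](big_setID S) /= (setIidPr sSS') [X in _ = _ + X]big1 ?addr0 => [|s].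
  by apply: eq_bigr => s sS; rewrite sS mulr1n.
by rewrite !inE => /andP[/negbTE-> _]; rewrite mulr0n scale0r.
Qed.

Lemma cone_of_sumD1 S b s0 : s0 \in S -> (forall s, 0 <= b s) ->
  cone_of v S (\sum_(s in S) b s *: v s - b s0 *: v s0).
Proof.
move=> s0S b_ge0; exists (fun s => b s *+ (s != s0)); split=> [s|].
  by rewrite mulrn_wge0.
rewrite (bigD1 s0) //= [in RHS](bigD1 s0) //= eqxx mulr0n scale0r add0r.
rewrite [b s0 *: _ + _]addrC addrK.
by apply: eq_bigr => s /andP[_ ->]; rewrite mulr1n.
Qed.

Variables (r : nat) (F : 'I_r -> {set 'I_n}).
Hypothesis simplicial : simplicial_fan v F.

Lemma simplicial_coord_unique j a b :
  \sum_(i in F j) a i *: v i = \sum_(i in F j) b i *: v i -> {in F j, a =1 b}.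
Proof.
move=> eq_ab i iF; apply/eqP; rewrite -subr_eq0; apply/eqP.
apply: (simplicial (a := fun i => a i - b i)) iF.
by under eq_bigr do rewrite scalerBl; rewrite sumrB eq_ab subrr.
Qed.

Lemma simplicial_gen_neq0 j i : i \in F j -> v i != 0.
Proof.
move=> iF; apply/negP => /eqP vi0.
have := simplicial (a := fun t => (t == i)%:R) _ iF.
by rewrite sum_indicator_scale // vi0 eqxx => /(_ erefl) /eqP; rewrite oner_eq0.
Qed.

Lemma cone_extreme_ray j i x y : i \in F j ->
  cone_of v (F j) x -> cone_of v (F j) y -> x + y = v i ->
  exists2 t, 0 <= t & x = t *: v i.
Proof.
move=> iF [a [a_ge0 xE]] [b [b_ge0 yE]] xy.
have coord : {in F j, (fun t => a t + b t) =1 (fun t => (t == i)%:R)}.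
  apply: simplicial_coord_unique; rewrite sum_indicator_scale // -xy xE yE -big_split.
  by apply: eq_bigr => s _; rewrite scalerDl.
exists (a i) => //; rewrite xE (bigD1 i) //= big1 ?addr0 // => t /andP[tF ti].
have /eqP := coord t tF; rewrite /= (negbTE ti) paddr_eq0 //.
by case/andP=> /eqP-> _; rewrite scale0r.
Qed.

End Cones.

Section PolytopalFan.
Variables (R : realFieldType) (d n r m : nat).
Variables (v : 'I_n -> 'rV[R]_d) (F : 'I_r -> {set 'I_n}) (X : 'I_m -> 'rV[R]_d).
Local Notation cone_is_normal j k := (forall c, cone_of v (F j) c <-> normal_cone X k c).
Hypothesis simplicial : simplicial_fan v F.
Hypothesis rays_distinct :
  forall i i', i != i' -> ~ (exists t : R, 0 < t /\ v i' = t *: v i).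
Hypothesis facets_distinct : forall j j', j != j' ->
  ~ (forall x, cone_of v (F j) x <-> cone_of v (F j') x).
Hypothesis facet_normal : forall j, exists k, is_vertex X k /\ cone_is_normal j k.
Hypothesis vertex_facet : forall k, is_vertex X k -> exists j, cone_is_normal j k.

Lemma gen_mem_of_cone j j' i : i \in F j -> cone_of v (F j') (v i) -> i \in F j'.
Proof.
(* [cone(F_j) \cap cone(F_j')] is a face of [cone(F_j')], so any generator
   [v_s0] of [F_j'] used in [v_i] lies in [cone(F_j)]; as [v_i] spans an
   extreme ray of the simplicial cone [cone(F_j)], [v_s0] is on that ray. *)
move=> iF [b [b_ge0 viE]].
have [k [_ ck]] := facet_normal j; have [k' [_ ck']] := facet_normal j'.
have [s0 s0F bs0] : exists2 s0, s0 \in F j' & 0 < b s0.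
  case: (boolP [exists s0 in F j', 0 < b s0]) => [/exists_inP[s0] | /exists_inPn b_le0].
    by exists s0.
  have := simplicial_gen_neq0 simplicial iF; rewrite viE big1 ?eqxx // => s sF.
  have -> : b s = 0 by apply/le_anti; rewrite b_ge0 leNgt b_le0.
  by rewrite scale0r.
pose x := b s0 *: v s0; pose y := v i - x.
have xy : x + y = v i by rewrite addrC subrK.
have x_nc' : normal_cone X k' x by apply/ck'/cone_ofZ/cone_of_gen; rewrite ?ltW.
have y_nc' : normal_cone X k' y by apply/ck'; rewrite /y viE; apply: cone_of_sumD1.
have xy_nc : normal_cone X k (x + y) by rewrite xy; apply/ck/cone_of_gen.
have x_cone : cone_of v (F j) x by apply/ck/(normal_cone_face x_nc' y_nc').
have y_cone : cone_of v (F j) y by apply/ck/(normal_cone_face y_nc' x_nc'); rewrite addrC.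
have [t t_ge0 xt] := cone_extreme_ray simplicial iF x_cone y_cone xy.
case: (eqVneq i s0) => [->//|is0]; case: (rays_distinct is0).
have t_gt0 : 0 < t.
  rewrite lt_def t_ge0 andbT; apply: contraNneq (simplicial_gen_neq0 simplicial s0F).
  by move=> t0; move/eqP: xt; rewrite t0 scale0r scaler_eq0 gt_eqF.
exists (t / b s0); split; first by rewrite divr_gt0.
by rewrite mulrC -scalerA -xt /x scalerA mulVf ?scale1r ?gt_eqF.
Qed.

Lemma facets_antichain j j' : F j \subset F j' -> j = j'.
Proof.
move=> sFF; have [k [[c c_strict] ck]] := facet_normal j.
have [k' [_ ck']] := facet_normal j'.
have c_nc' : normal_cone X k' c.
  by apply/ck'/(cone_of_subset sFF)/ck/normal_cone_strict.
have Xkk' : X k = X k'.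
  by apply/eqP; apply: contraT => kk'; have := c_nc' k; rewrite leNgt c_strict // eq_sym.
apply/eqP; apply: contraT => jj'; case: (facets_distinct jj') => x.
by rewrite ck ck' /normal_cone Xkk'.
Qed.

Lemma cone_boundary_tie j k l (a : 'I_n -> R) : cone_is_normal j k -> l \in F j ->
  (forall t, 0 <= a t) -> a l = 0 ->
  let p := \sum_(t in F j) a t *: v t in
  exists2 b, X b != X k & dotv p (X b) = dotv p (X k).
Proof.
(* Otherwise [p] is a strict maximiser, so [p - del v_l] stays in the normal
   cone [cone(F_j)] for small [del > 0], with a negative [l]-coordinate. *)
move=> ck lF a_ge0 al0 p; have p_nc : normal_cone X k p by apply/ck; exists a.
case: (boolP [exists b, (X b != X k) && (dotv p (X b) == dotv p (X k))]).
  by case/existsP=> b /andP[bk /eqP tie]; exists b.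
move=> /existsPn no_tie; exfalso.
have [del del_gt0 keep] := perturb_strict_max X p (- v l) k.
have [a' [a'_ge0 qE]] : cone_of v (F j) (p + del *: - v l).
  apply/ck => b; case: (eqVneq (X b) (X k)) => [->//|bk]; apply/ltW/keep.
  by rewrite lt_neqAle p_nc andbT; have := no_tie b; rewrite bk.
have coord : {in F j, (fun t => a t - del * (t == l)%:R) =1 a'}.
  apply: (simplicial_coord_unique simplicial); rewrite -qE.
  under eq_bigr do rewrite scalerBl -scalerA.
  by rewrite sumrB -scaler_sumr sum_indicator_scale // scalerN.
by have := a'_ge0 l; rewrite -coord //= al0 eqxx mulr1 sub0r oppr_ge0 leNgt del_gt0.
Qed.

Lemma ridge_shared j l : l \in F j -> exists2 j', j' != j & F j :\ l \subset F j'.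
Proof.
move=> lF; have [k [[c c_strict] ck]] := facet_normal j.
pose a t : R := (t != l)%:R.
have a_ge0 t : 0 <= a t by rewrite ler0n.
have [|b bk tie] := cone_boundary_tie ck lF a_ge0; first by rewrite /a eqxx.
set p := \sum_(t in F j) a t *: v t in tie.
have p_nc : normal_cone X k p by apply/ck; exists a.
have [k' [k'_vert k'k p_nc']] := normal_cone_tie p_nc bk tie.
have [j' ck'] := vertex_facet k'_vert.
exists j'.
  apply/eqP => j'j; have c_cone : cone_of v (F j) c by apply/ck/normal_cone_strict.
  by move: c_cone; rewrite -j'j ck' => /(_ k); rewrite leNgt c_strict.
apply/subsetP => t /setD1P[tl tF]; apply: (gen_mem_of_cone tF); apply/ck'.
have rest_cone : cone_of v (F j) (p - v t).
  by have := cone_of_sumD1 v tF a_ge0; rewrite {2}/a tl scale1r.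
apply: (normal_cone_face (y := p - v t) _ ((ck _).1 rest_cone)).
  exact/ck/cone_of_gen.
by rewrite addrC subrK.
Qed.

End PolytopalFan.

Theorem lemma3p10 (R : realFieldType) (d n r : nat)
  (v : 'I_n -> 'rV[R]_d) (F : 'I_r -> {set 'I_n}) :
  fan_data v F -> simplicial_fan v F -> polytopal_fan v F ->
  exists M : {set 'I_n * 'I_r}, is_matching F M /\ #|M| = n.
Proof.
move=> [covered rays_distinct facets_distinct] simplicial.
move=> [m [X [_ facet_normal vertex_facet]]].
have deg_le i j : i \in F j -> (#|[set i' | i' \in F j]| <= #|[set j' | i \in F j']|)%N.
  rewrite cardsE; apply: card_le_degree.
    exact: facets_antichain facets_distinct facet_normal.
  exact: ridge_shared simplicial rays_distinct facet_normal vertex_facet.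
have hall := hall_of_degree_le covered deg_le.
case: (posnP n) => [n0 | n_gt0].
  by exists set0; rewrite cards0; split=> //; split=> e; rewrite inE.
have [j0 _] := covered (Ordinal n_gt0).
have [f [f_inj fF]] := hall_marriage j0 hall.
exists [set (i, f i) | i : 'I_n]; rewrite card_imset ?card_ord => [|i i' [] //].
split=> //; split=> [_ /imsetP[i _ ->] | _ _ /imsetP[i _ ->] /imsetP[i' _ ->] ne].
  exact: fF.
split; apply: contraNneq ne => /= eq_ii'; first by rewrite eq_ii'.
by rewrite (f_inj _ _ eq_ii').
Qed.
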